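(* Let $X$ be a complex separable Hilbert space, $A\in\mathcal B(X)$, $0<\tau<\infty$, and let $\mathcal G\subset X$ be a countable Bessel system. The following are equivalent: (1) $\{e^{tA^*}g\}_{g\in\mathcal G,\,t\in[0,\tau)}$ is a semi-continuous frame for $X$; (2) there exists $\delta>0$ such that for every finite set $T=\{t_1,\dots,t_n\}$ with $0=t_1<t_2<\dots<t_n\le t_{n+1}:=\tau$ and $|t_{i+1}-t_i|<\delta$ for all $i\in\{1,\dots,n\}$, the system $\{e^{tA^*}g\}_{g\in\mathcal G,\,t\in T}$ is a frame for $X$; (3) there exists a finite set $T=\{t_1,\dots,t_n\}$ with $0=t_1<t_2<\dots<t_n\le\tau$ such that $\{e^{tA^*}g\}_{g\in\mathcal G,\,t\in T}$ is a frame for $X$.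
   Context: $e^{tA^*}=\sum_{n\ge0}(tA^* )^n/n!$. A countable family $\{f_j\}$ in $X$ is a Bessel system if $\sum_j|\langle x,f_j\rangle|^2\le C\|x\|^2$ for all $x$, and a frame if additionally $\sum_j|\langle x,f_j\rangle|^2\ge c\|x\|^2$ for some $c>0$. The family $\{e^{tA^*}g\}_{g\in\mathcal G,t\in[0,\tau)}$ is a semi-continuous frame if there are $c_1,c_2>0$ with $c_1\|x\|^2\le\sum_{g\in\mathcal G}\int_0^\tau|\langle x,e^{tA^*}g\rangle|^2dt\le c_2\|x\|^2$ for all $x\in X$. *)

From Stdlib Require Import Reals Lra List Factorial ClassicalEpsilon.
Open Scope R_scope.

Record C := mkC { Re : R; Im : R }.
Definition C0 : C := mkC 0 0.
Definition C1 : C := mkC 1 0.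
Definition RtoC (r : R) : C := mkC r 0.
Definition Cadd (z w : C) : C := mkC (Re z + Re w) (Im z + Im w).
Definition Cmul (z w : C) : C :=
  mkC (Re z * Re w - Im z * Im w) (Re z * Im w + Im z * Re w).
Definition Cconj (z : C) : C := mkC (Re z) (- Im z).
Definition Cabs2 (z : C) : R := Re z * Re z + Im z * Im z.

(* ---------- complex Hilbert spaces (separable) ----------
   inner product linear in the first argument, conjugate-linear in the second *)
Record HilbertSpace := {
  hs_car :> Type;
  hs_zero : hs_car;
  hs_add : hs_car -> hs_car -> hs_car;
  hs_opp : hs_car -> hs_car;
  hs_scal : C -> hs_car -> hs_car;
  hs_inner : hs_car -> hs_car -> C;
  hs_add_assoc : forall x y z, hs_add x (hs_add y z) = hs_add (hs_add x y) z;
  hs_add_comm : forall x y, hs_add x y = hs_add y x;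
  hs_add_zero : forall x, hs_add x hs_zero = x;
  hs_add_opp : forall x, hs_add x (hs_opp x) = hs_zero;
  hs_scal_one : forall x, hs_scal C1 x = x;
  hs_scal_assoc : forall a b x, hs_scal a (hs_scal b x) = hs_scal (Cmul a b) x;
  hs_scal_distr_v : forall a x y, hs_scal a (hs_add x y) = hs_add (hs_scal a x) (hs_scal a y);
  hs_scal_distr_c : forall a b x, hs_scal (Cadd a b) x = hs_add (hs_scal a x) (hs_scal b x);
  hs_inner_conj : forall x y, hs_inner y x = Cconj (hs_inner x y);
  hs_inner_add_l : forall x y z, hs_inner (hs_add x y) z = Cadd (hs_inner x z) (hs_inner y z);
  hs_inner_scal_l : forall a x y, hs_inner (hs_scal a x) y = Cmul a (hs_inner x y);
  hs_inner_pos : forall x, 0 <= Re (hs_inner x x);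
  hs_inner_def : forall x, Re (hs_inner x x) = 0 -> x = hs_zero;
  hs_complete : forall u : nat -> hs_car,
    (forall eps, eps > 0 -> exists N, forall m n, (N <= m)%nat -> (N <= n)%nat ->
       sqrt (Re (hs_inner (hs_add (u m) (hs_opp (u n))) (hs_add (u m) (hs_opp (u n))))) < eps) ->
    exists l, forall eps, eps > 0 -> exists N, forall n, (N <= n)%nat ->
       sqrt (Re (hs_inner (hs_add (u n) (hs_opp l)) (hs_add (u n) (hs_opp l)))) < eps;
  hs_separable : exists d : nat -> hs_car, forall x eps, eps > 0 -> exists n,
       sqrt (Re (hs_inner (hs_add x (hs_opp (d n))) (hs_add x (hs_opp (d n))))) < eps
}.

Arguments hs_zero {h}.
Arguments hs_add {h}.
Arguments hs_opp {h}.
Arguments hs_scal {h}.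
Arguments hs_inner {h}.

Definition hs_norm {X : HilbertSpace} (x : X) : R := sqrt (Re (hs_inner x x)).
Definition hs_sub {X : HilbertSpace} (x y : X) : X := hs_add x (hs_opp y).

Definition cv_X {X : HilbertSpace} (u : nat -> X) (l : X) : Prop :=
  forall eps, eps > 0 -> exists N, forall n, (N <= n)%nat -> hs_norm (hs_sub (u n) l) < eps.

Definition is_bounded_op {X : HilbertSpace} (A : X -> X) : Prop :=
  (forall x y, A (hs_add x y) = hs_add (A x) (A y)) /\
  (forall a x, A (hs_scal a x) = hs_scal a (A x)) /\
  (exists M, forall x, hs_norm (A x) <= M * hs_norm x).

Definition is_adjoint {X : HilbertSpace} (A B : X -> X) : Prop :=
  forall x y, hs_inner (A x) y = hs_inner x (B y).

Fixpoint exp_partial {X : HilbertSpace} (B : X -> X) (t : R) (x : X) (N : nat) : X :=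
  match N with
  | O => x
  | S M => hs_add (exp_partial B t x M)
                  (hs_scal (RtoC (t ^ S M / INR (fact (S M)))) (Nat.iter (S M) B x))
  end.

(* E t = e^{tB} = sum_{n>=0} (tB)^n/n!  (the series converges in operator norm;
   here E t x is characterised as the norm limit of the series applied to x) *)
Definition is_exp {X : HilbertSpace} (B : X -> X) (E : R -> X -> X) : Prop :=
  forall t x, cv_X (fun N => exp_partial B t x N) (E t x).

Definition sum_list {J : Type} (w : J -> R) (l : list J) : R :=
  fold_right (fun a s => w a + s) 0 l.

Definition sum_le {J : Type} (D : J -> Prop) (w : J -> R) (B : R) : Prop :=
  forall l, NoDup l -> Forall D l -> sum_list w l <= B.

(* sum_{j in D} w j >= B  (the sum being the sup of finite partial sums) *)
Definition sum_ge {J : Type} (D : J -> Prop) (w : J -> R) (B : R) : Prop :=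
  forall eps, eps > 0 -> exists l, NoDup l /\ Forall D l /\ B - eps < sum_list w l.

Definition countable_set {J : Type} (D : J -> Prop) : Prop :=
  exists f : J -> nat, forall x y, D x -> D y -> f x = f y -> x = y.

Definition is_bessel {X : HilbertSpace} {J : Type} (D : J -> Prop) (F : J -> X) : Prop :=
  exists Cb, forall x : X, sum_le D (fun j => Cabs2 (hs_inner x (F j))) (Cb * hs_norm x ^ 2).

Definition is_frame {X : HilbertSpace} {J : Type} (D : J -> Prop) (F : J -> X) : Prop :=
  is_bessel D F /\
  exists c, c > 0 /\ forall x : X, sum_ge D (fun j => Cabs2 (hs_inner x (F j))) (c * hs_norm x ^ 2).

(* Riemann integral (the integrands below are continuous, hence integrable) *)
Definition RInt (f : R -> R) (a b : R) : R :=
  match excluded_middle_informative (inhabited (Riemann_integrable f a b)) with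
  | left H => RiemannInt (epsilon H (fun _ => True))
  | right _ => 0
  end.

Definition semicont_frame {X : HilbertSpace} (E : R -> X -> X) (G : X -> Prop) (tau : R) : Prop :=
  exists c1 c2, c1 > 0 /\ c2 > 0 /\ forall x : X,
    sum_ge G (fun g => RInt (fun t => Cabs2 (hs_inner x (E t g))) 0 tau) (c1 * hs_norm x ^ 2) /\
    sum_le G (fun g => RInt (fun t => Cabs2 (hs_inner x (E t g))) 0 tau) (c2 * hs_norm x ^ 2).

Definition sample_set (tau : R) (T : list R) : Prop :=
  (1 <= length T)%nat /\ nth 0 T 0 = 0 /\
  (forall i, (S i < length T)%nat -> nth i T 0 < nth (S i) T 0) /\
  nth (length T - 1) T 0 <= tau.

Definition mesh_lt (tau delta : R) (T : list R) : Prop :=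
  (forall i, (S i < length T)%nat -> Rabs (nth (S i) T 0 - nth i T 0) < delta) /\
  Rabs (tau - nth (length T - 1) T 0) < delta.

Definition disc_frame {X : HilbertSpace} (E : R -> X -> X) (G : X -> Prop) (T : list R) : Prop :=
  is_frame (fun p : X * R => G (fst p) /\ In (snd p) T) (fun p => E (snd p) (fst p)).

From Pilot Require Import Defs.
From Stdlib Require Import Reals List.
From Stdlib Require Import Lra Lia ZArith ClassicalEpsilon FunctionalExtensionality.
Open Scope R_scope.

(* For x in X and a finite list l of generators let F(t) = sum_(g in l) |<x, exp(t A^* ) g>|^2,
   which is sum_(g in l) |<exp(t A) x, g>|^2.  As G is a Bessel system and the partial sums of
   exp(t A) are bounded and Lipschitz in t on compact intervals, uniformly in l we get
   F(t) <= C |x|^2 on [0, tau] and F(u) <= 2 F(t) + 2 L |x|^2 (u - t)^2.  Hence the integral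
   of F and its sums over a sample set T control each other: for mesh delta,
   int_0^tau F <= 2 delta sum_T F + 2 L delta^2 tau |x|^2, and, charging to each t in T a
   window of length s at distance at most s from t (disjoint for s small against the gaps
   of T), s sum_T (F/2 - L s^2 |x|^2) <= int_0^tau F.  Taking delta resp. s small transfers
   the lower frame bound in either direction; the upper bounds come from F <= C |x|^2, and
   a uniform grid gives (2) => (3). *)

Definition Csub (z w : Defs.C) : Defs.C := mkC (Re z - Re w) (Im z - Im w).

Lemma C_ext (a b : Defs.C) : Re a = Re b -> Im a = Im b -> a = b.
Proof. destruct a, b; simpl; intros; subst; reflexivity. Qed.

Lemma Cabs2_ge0 z : 0 <= Cabs2 z.
Proof. unfold Cabs2. nra. Qed.

Lemma Cabs2_le_sub a b : Cabs2 a <= 2 * Cabs2 b + 2 * Cabs2 (Csub a b).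
Proof.
  unfold Cabs2, Csub; simpl.
  pose proof (Rle_0_sqr (Re a - 2 * Re b)). pose proof (Rle_0_sqr (Im a - 2 * Im b)).
  unfold Rsqr in *. nra.
Qed.

Lemma Re_sqr_le_Cabs2 z : Re z ^ 2 <= Cabs2 z.
Proof. unfold Cabs2. nra. Qed.

Lemma Im_sqr_le_Cabs2 z : Im z ^ 2 <= Cabs2 z.
Proof. unfold Cabs2. nra. Qed.

Section InnerProduct.
Variable X : HilbertSpace.
Implicit Types x y z u v w : X.

Lemma Re_inner_addl x y z : Re (hs_inner (hs_add x y) z) = Re (hs_inner x z) + Re (hs_inner y z).
Proof. rewrite hs_inner_add_l; reflexivity. Qed.
Lemma Im_inner_addl x y z : Im (hs_inner (hs_add x y) z) = Im (hs_inner x z) + Im (hs_inner y z).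
Proof. rewrite hs_inner_add_l; reflexivity. Qed.
Lemma Re_inner_sym x y : Re (hs_inner x y) = Re (hs_inner y x).
Proof. rewrite (hs_inner_conj X x y); simpl; ring. Qed.
Lemma Im_inner_sym x y : Im (hs_inner x y) = - Im (hs_inner y x).
Proof. rewrite (hs_inner_conj X x y); simpl; ring. Qed.
Lemma Re_inner_addr x y z : Re (hs_inner x (hs_add y z)) = Re (hs_inner x y) + Re (hs_inner x z).
Proof. rewrite !(Re_inner_sym x), Re_inner_addl; reflexivity. Qed.
Lemma Im_inner_addr x y z : Im (hs_inner x (hs_add y z)) = Im (hs_inner x y) + Im (hs_inner x z).
Proof. rewrite !(Im_inner_sym x), Im_inner_addl; ring. Qed.
Lemma Re_inner_scall a x y :
  Re (hs_inner (hs_scal a x) y) = Re a * Re (hs_inner x y) - Im a * Im (hs_inner x y).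
Proof. rewrite hs_inner_scal_l; reflexivity. Qed.
Lemma Im_inner_scall a x y :
  Im (hs_inner (hs_scal a x) y) = Re a * Im (hs_inner x y) + Im a * Re (hs_inner x y).
Proof. rewrite hs_inner_scal_l; reflexivity. Qed.
Lemma Re_inner_scalr a x y :
  Re (hs_inner x (hs_scal a y)) = Re a * Re (hs_inner x y) + Im a * Im (hs_inner x y).
Proof. rewrite Re_inner_sym, Re_inner_scall, (Re_inner_sym y), (Im_inner_sym y); ring. Qed.
Lemma Im_inner_scalr a x y :
  Im (hs_inner x (hs_scal a y)) = Re a * Im (hs_inner x y) - Im a * Re (hs_inner x y).
Proof. rewrite Im_inner_sym, Im_inner_scall, (Re_inner_sym y), (Im_inner_sym y); ring. Qed.

Lemma inner_0l y : Re (hs_inner hs_zero y) = 0 /\ Im (hs_inner hs_zero y) = 0.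
Proof.
  pose proof (Re_inner_addl hs_zero hs_zero y). pose proof (Im_inner_addl hs_zero hs_zero y).
  rewrite hs_add_zero in *. split; lra.
Qed.
Lemma inner_0r y : Re (hs_inner y hs_zero) = 0 /\ Im (hs_inner y hs_zero) = 0.
Proof. rewrite Re_inner_sym, Im_inner_sym. destruct (inner_0l y); split; lra. Qed.

Lemma Re_inner_oppl x y : Re (hs_inner (hs_opp x) y) = - Re (hs_inner x y).
Proof.
  pose proof (Re_inner_addl x (hs_opp x) y). rewrite hs_add_opp in *.
  destruct (inner_0l y); lra.
Qed.
Lemma Im_inner_oppl x y : Im (hs_inner (hs_opp x) y) = - Im (hs_inner x y).
Proof.
  pose proof (Im_inner_addl x (hs_opp x) y). rewrite hs_add_opp in *.
  destruct (inner_0l y); lra.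
Qed.
Lemma Re_inner_oppr x y : Re (hs_inner x (hs_opp y)) = - Re (hs_inner x y).
Proof. rewrite Re_inner_sym, Re_inner_oppl, Re_inner_sym; ring. Qed.
Lemma Im_inner_oppr x y : Im (hs_inner x (hs_opp y)) = - Im (hs_inner x y).
Proof. rewrite Im_inner_sym, Im_inner_oppl, Im_inner_sym; ring. Qed.
Lemma Im_inner_self x : Im (hs_inner x x) = 0.
Proof. pose proof (Im_inner_sym x x); lra. Qed.

End InnerProduct.

Ltac inner_simpl := repeat first
  [ rewrite Re_inner_addl | rewrite Re_inner_addr | rewrite Re_inner_oppl | rewrite Re_inner_oppr
  | rewrite Im_inner_addl | rewrite Im_inner_addr | rewrite Im_inner_oppl | rewrite Im_inner_oppr
  | rewrite Re_inner_scall | rewrite Re_inner_scalr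
  | rewrite Im_inner_scall | rewrite Im_inner_scalr ].

Section Norm.
Variable X : HilbertSpace.
Implicit Types x y z u v w : X.

Lemma inner_ext u v :
  (forall z, Re (hs_inner u z) = Re (hs_inner v z) /\ Im (hs_inner u z) = Im (hs_inner v z)) ->
  u = v.
Proof.
  intros H. set (w := hs_sub u v).
  assert (Hw : w = hs_zero).
  { apply hs_inner_def. unfold w at 1, hs_sub. inner_simpl. destruct (H w); lra. }
  assert (Hu : hs_add w v = u).
  { unfold w, hs_sub. rewrite <- hs_add_assoc, (hs_add_comm X _ v), hs_add_opp, hs_add_zero.
    reflexivity. }
  rewrite <- Hu, Hw, hs_add_comm, hs_add_zero. reflexivity.
Qed.

Lemma norm_ge0 x : 0 <= hs_norm x.
Proof. apply sqrt_pos. Qed.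

Lemma norm_sqr x : hs_norm x ^ 2 = Re (hs_inner x x).
Proof. unfold hs_norm. rewrite pow2_sqrt; [reflexivity | apply hs_inner_pos]. Qed.

Lemma norm_sub_diag x : hs_norm (hs_sub x x) = 0.
Proof.
  unfold hs_norm, hs_sub. rewrite hs_add_opp. destruct (inner_0l X hs_zero) as [-> _].
  apply sqrt_0.
Qed.

Lemma norm_scal_real r v : hs_norm (hs_scal (RtoC r) v) = Rabs r * hs_norm v.
Proof.
  unfold hs_norm. inner_simpl. rewrite Im_inner_self. simpl.
  replace (r * (r * Re (hs_inner v v) + 0 * 0) - 0 * (r * 0 - 0 * Re (hs_inner v v)))
    with (Rsqr r * Re (hs_inner v v)) by (unfold Rsqr; ring).
  rewrite sqrt_mult by (apply Rle_0_sqr || apply hs_inner_pos).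
  rewrite sqrt_Rsqr_abs. reflexivity.
Qed.

Lemma Cauchy_Schwarz_Re u v : Rabs (Re (hs_inner u v)) <= hs_norm u * hs_norm v.
Proof.
  destruct (Req_dec (Re (hs_inner v v)) 0) as [H0 | H0].
  { apply hs_inner_def in H0. subst v. destruct (inner_0r X u) as [-> _].
    rewrite Rabs_R0. apply Rmult_le_pos; apply norm_ge0. }
  set (a := Re (hs_inner u u)). set (b := Re (hs_inner u v)). set (c := Re (hs_inner v v)).
  assert (Hc : 0 < c) by (pose proof (hs_inner_pos X v); unfold c in *; lra).
  (* nonnegativity of the quadratic [l |-> |u + l v|^2] at its minimum [l = -b/c] *)
  assert (Hq : 0 <= a + 2 * (- b / c) * b + (- b / c) * (- b / c) * c).
  { pose proof (hs_inner_pos X (hs_add u (hs_scal (RtoC (- b / c)) v))) as H.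
    revert H. inner_simpl. simpl. rewrite (Re_inner_sym X v u). unfold a, b, c. intro H. nra. }
  assert (Hb : b * b <= a * c).
  { replace (a + 2 * (- b / c) * b + - b / c * (- b / c) * c) with (a - b * b / c) in Hq
      by (field; lra).
    apply Rmult_le_reg_r with (/ c); [apply Rinv_0_lt_compat; lra |].
    replace (a * c * / c) with a by (field; lra). unfold Rdiv in Hq. lra. }
  unfold hs_norm. rewrite <- sqrt_mult by apply hs_inner_pos.
  rewrite <- sqrt_Rsqr_abs. apply sqrt_le_1_alt. unfold Rsqr. fold a c. lra.
Qed.

Lemma Cauchy_Schwarz_Im u v : Rabs (Im (hs_inner u v)) <= hs_norm u * hs_norm v.
Proof.
  set (i := mkC 0 1).
  assert (Hi : Im (hs_inner u v) = Re (hs_inner u (hs_scal i v))) by (inner_simpl; simpl; ring).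
  assert (Hn : hs_norm (hs_scal i v) = hs_norm v).
  { unfold hs_norm. f_equal. inner_simpl. rewrite Im_inner_self. simpl. ring. }
  rewrite Hi, <- Hn. apply Cauchy_Schwarz_Re.
Qed.

Lemma norm_triangle u v : hs_norm (hs_add u v) <= hs_norm u + hs_norm v.
Proof.
  apply Rsqr_incr_0_var; [| apply Rplus_le_le_0_compat; apply norm_ge0].
  assert (Hsq : forall w, Rsqr (hs_norm w) = Re (hs_inner w w))
    by (intro w; rewrite <- norm_sqr; unfold Rsqr; ring).
  rewrite Hsq. inner_simpl. rewrite (Re_inner_sym X v u), <- !norm_sqr.
  pose proof (Cauchy_Schwarz_Re u v). pose proof (Rle_abs (Re (hs_inner u v))).
  unfold Rsqr. nra.
Qed.

Lemma hs_sub_add_scal (P Q w : X) (a b : R) :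
  hs_sub (hs_add P (hs_scal (RtoC a) w)) (hs_add Q (hs_scal (RtoC b) w))
  = hs_add (hs_sub P Q) (hs_scal (RtoC (a - b)) w).
Proof. apply inner_ext. intro z. unfold hs_sub. inner_simpl. simpl. split; ring. Qed.

End Norm.

Section Convergence.
Variable X : HilbertSpace.

Lemma Un_cv_of_cv_X (u : nat -> X) (l : X) (v : nat -> R) (c K : R) :
  0 <= K -> (forall n, Rabs (v n - c) <= K * hs_norm (hs_sub (u n) l)) ->
  cv_X u l -> Un_cv v c.
Proof.
  intros HK Hv Hu eps Heps.
  destruct (Hu (eps / (K + 1))) as [N HN]; [apply Rdiv_lt_0_compat; lra |].
  exists N. intros n Hn. unfold Rdist. specialize (HN n Hn).
  eapply Rle_lt_trans; [apply Hv |].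
  apply Rle_lt_trans with (K * (eps / (K + 1))); [apply Rmult_le_compat_l; lra |].
  apply Rlt_le_trans with ((K + 1) * (eps / (K + 1))); [| right; field; lra].
  apply Rmult_lt_compat_r; [apply Rdiv_lt_0_compat |]; lra.
Qed.

Lemma cv_X_inner (u : nat -> X) (l x : X) : cv_X u l ->
  Un_cv (fun N => Re (hs_inner x (u N))) (Re (hs_inner x l)) /\
  Un_cv (fun N => Im (hs_inner x (u N))) (Im (hs_inner x l)).
Proof.
  intro H. split; apply (Un_cv_of_cv_X u l _ _ (hs_norm x)); auto using norm_ge0; intro n.
  - replace (Re (hs_inner x (u n)) - Re (hs_inner x l)) with (Re (hs_inner x (hs_sub (u n) l)))
      by (unfold hs_sub; inner_simpl; ring).
    apply Cauchy_Schwarz_Re.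
  - replace (Im (hs_inner x (u n)) - Im (hs_inner x l)) with (Im (hs_inner x (hs_sub (u n) l)))
      by (unfold hs_sub; inner_simpl; ring).
    apply Cauchy_Schwarz_Im.
Qed.

End Convergence.

Lemma Un_cv_le_bound (a : nat -> R) l B : Un_cv a l -> (forall n, a n <= B) -> l <= B.
Proof.
  intros H HB. destruct (Rle_lt_dec l B) as [| Hlt]; [assumption |].
  destruct (H (l - B)) as [N HN]; [lra |]. specialize (HN N (le_n N)).
  unfold Rdist in HN. specialize (HB N). apply Rabs_def2 in HN. lra.
Qed.

Lemma INR_fact_gt0 n : 0 < INR (fact n).
Proof. apply lt_0_INR, lt_O_fact. Qed.

(* [exp_sum y N] has the [N] terms of index [0 .. N-1]. *)
Fixpoint exp_sum (y : R) (N : nat) : R :=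
  match N with O => 0 | S n => exp_sum y n + y ^ n / INR (fact n) end.

Lemma exp_sum_ge0 y N : 0 <= y -> 0 <= exp_sum y N.
Proof.
  intro Hy. induction N as [| N IH]; simpl; [lra |].
  assert (0 <= y ^ N / INR (fact N)).
  { apply Rmult_le_pos; [apply pow_le; lra | left; apply Rinv_0_lt_compat, INR_fact_gt0]. }
  lra.
Qed.

Lemma exp_sum_le_exp y N : 0 <= y -> exp_sum y N <= exp y.
Proof.
  intro Hy. destruct N as [| N]; [simpl; left; apply exp_pos |].
  assert (Hsum : exp_sum y (S N) = sum_f_R0 (fun i => / INR (fact i) * y ^ i) N).
  { induction N as [| N IH].
    - simpl. unfold Rdiv. rewrite Rinv_1. ring.
    - change (exp_sum y (S (S N))) with (exp_sum y (S N) + y ^ S N / INR (fact (S N))).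
      rewrite IH, tech5. unfold Rdiv. ring. }
  rewrite Hsum. apply sum_incr.
  - unfold exp. destruct (exist_exp y) as [l Hl]. exact Hl.
  - intro n. apply Rmult_le_pos; [left; apply Rinv_0_lt_compat, INR_fact_gt0 | apply pow_le; lra].
Qed.

Lemma Rabs_pow_div_fact_le t R n : Rabs t <= R ->
  Rabs (t ^ n / INR (fact n)) <= R ^ n / INR (fact n).
Proof.
  intro Ht. pose proof (INR_fact_gt0 n).
  unfold Rdiv. rewrite Rabs_mult, Rabs_inv, <- RPow_abs, (Rabs_pos_eq (INR _)) by lra.
  apply Rmult_le_compat_r; [left; apply Rinv_0_lt_compat; lra |].
  apply pow_incr. split; [apply Rabs_pos | assumption].
Qed.

Lemma Rabs_pow_sub_le t s R n : Rabs t <= R -> Rabs s <= R ->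
  Rabs (t ^ S n - s ^ S n) <= INR (S n) * R ^ n * Rabs (t - s).
Proof.
  intros Ht Hs. assert (HR : 0 <= R) by (pose proof (Rabs_pos t); lra).
  induction n as [| n IH]; [simpl; rewrite !Rmult_1_r; lra |].
  replace (t ^ S (S n) - s ^ S (S n)) with (t * (t ^ S n - s ^ S n) + s ^ S n * (t - s))
    by (simpl; ring).
  eapply Rle_trans; [apply Rabs_triang |]. rewrite !Rabs_mult.
  assert (H1 : Rabs (s ^ S n) <= R ^ S n)
    by (rewrite <- RPow_abs; apply pow_incr; split; [apply Rabs_pos | assumption]).
  assert (H2 : Rabs t * Rabs (t ^ S n - s ^ S n) <= R * (INR (S n) * R ^ n * Rabs (t - s)))
    by (apply Rmult_le_compat; try apply Rabs_pos; assumption).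
  assert (H3 : Rabs (s ^ S n) * Rabs (t - s) <= R ^ S n * Rabs (t - s))
    by (apply Rmult_le_compat_r; [apply Rabs_pos | assumption]).
  rewrite (S_INR (S n)). change (R ^ S n) with (R * R ^ n) in *. nra.
Qed.

Lemma Rabs_pow_div_fact_sub_le t s R n : Rabs t <= R -> Rabs s <= R ->
  Rabs (t ^ S n / INR (fact (S n)) - s ^ S n / INR (fact (S n)))
    <= Rabs (t - s) * (R ^ n / INR (fact n)).
Proof.
  intros Ht Hs. pose proof (INR_fact_gt0 n). pose proof (INR_fact_gt0 (S n)).
  pose proof (lt_0_INR (S n) (Nat.lt_0_succ n)).
  assert (Hf : INR (fact (S n)) = INR (S n) * INR (fact n))
    by (rewrite fact_simpl, mult_INR; reflexivity).
  replace (t ^ S n / INR (fact (S n)) - s ^ S n / INR (fact (S n)))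
    with ((t ^ S n - s ^ S n) / INR (fact (S n))) by (field; lra).
  unfold Rdiv at 1. rewrite Rabs_mult, Rabs_inv, (Rabs_pos_eq (INR _)) by lra.
  apply Rle_trans with (INR (S n) * R ^ n * Rabs (t - s) * / INR (fact (S n))).
  - apply Rmult_le_compat_r; [left; apply Rinv_0_lt_compat; lra |].
    apply Rabs_pow_sub_le; assumption.
  - right. rewrite Hf. field. lra.
Qed.

Lemma exists_small_pos a b m : 0 < a -> 0 <= b -> 0 < m ->
  exists d, 0 < d <= m /\ b * d ^ 2 <= a.
Proof.
  intros Ha Hb Hm. set (d := Rmin m (Rmin 1 (a / (b + 1)))).
  assert (Hq : 0 < a / (b + 1)) by (apply Rdiv_lt_0_compat; lra).
  assert (Hd : 0 < d) by (apply Rmin_pos; [| apply Rmin_pos]; lra).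
  assert (Hd1 : d <= 1) by (eapply Rle_trans; [apply Rmin_r | apply Rmin_l]).
  assert (Hda : d <= a / (b + 1)) by (eapply Rle_trans; [apply Rmin_r | apply Rmin_r]).
  exists d. split; [split; [| apply Rmin_l]; lra |].
  apply Rle_trans with (b * d).
  { simpl. rewrite Rmult_1_r. apply Rmult_le_compat_l; [lra |]. nra. }
  apply Rle_trans with (b * (a / (b + 1))); [apply Rmult_le_compat_l; lra |].
  apply Rle_trans with ((b + 1) * (a / (b + 1))); [nra | right; field; lra].
Qed.

Section OperatorExponential.
Variable X : HilbertSpace.
Variables (A Astar : X -> X) (M : R).
Hypothesis M_ge0 : 0 <= M.
Hypothesis A_bounded : forall x, hs_norm (A x) <= M * hs_norm x.
Hypothesis A_adjoint : is_adjoint A Astar.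

Lemma inner_iter_adjoint n x g : hs_inner x (Nat.iter n Astar g) = hs_inner (Nat.iter n A x) g.
Proof.
  revert x. induction n as [| n IH]; intro x; [reflexivity |].
  assert (Hcomm : forall m y, Nat.iter m A (A y) = A (Nat.iter m A y))
    by (induction m; intro y; simpl; congruence).
  simpl. rewrite <- A_adjoint, IH, Hcomm. reflexivity.
Qed.

Lemma inner_exp_partial_adjoint t N x g :
  hs_inner x (exp_partial Astar t g N) = hs_inner (exp_partial A t x N) g.
Proof.
  induction N as [| N IH]; [reflexivity |].
  cbn [exp_partial]. apply C_ext; inner_simpl; rewrite (inner_iter_adjoint (S N));
    simpl Re; simpl Im; rewrite IH; ring.
Qed.

Lemma norm_iter_le n x : hs_norm (Nat.iter n A x) <= M ^ n * hs_norm x.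
Proof.
  induction n as [| n IH]; simpl; [lra |]. eapply Rle_trans; [apply A_bounded |].
  rewrite Rmult_assoc. apply Rmult_le_compat_l; assumption.
Qed.

Lemma norm_exp_term_le t R n x : Rabs t <= R ->
  Rabs (t ^ n / INR (fact n)) * hs_norm (Nat.iter n A x)
    <= (R * M) ^ n / INR (fact n) * hs_norm x.
Proof.
  intro Ht. assert (HR : 0 <= R) by (pose proof (Rabs_pos t); lra).
  apply Rle_trans with (R ^ n / INR (fact n) * (M ^ n * hs_norm x)).
  - apply Rmult_le_compat; try apply Rabs_pos; try apply norm_ge0.
    + apply Rabs_pow_div_fact_le; assumption.
    + apply norm_iter_le.
  - rewrite Rpow_mult_distr. right. unfold Rdiv. ring.
Qed.

Lemma norm_exp_partial_le t R x N : Rabs t <= R ->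
  hs_norm (exp_partial A t x N) <= exp_sum (R * M) (S N) * hs_norm x.
Proof.
  intro Ht. induction N as [| N IH].
  - simpl. unfold Rdiv. rewrite Rinv_1. pose proof (norm_ge0 X x). lra.
  - cbn [exp_partial]. eapply Rle_trans; [apply norm_triangle |]. rewrite norm_scal_real.
    pose proof (norm_exp_term_le t R (S N) x Ht).
    change (exp_sum (R * M) (S (S N)))
      with (exp_sum (R * M) (S N) + (R * M) ^ S N / INR (fact (S N))).
    lra.
Qed.


Lemma norm_exp_partial_sub_le t s R x N : Rabs t <= R -> Rabs s <= R ->
  hs_norm (hs_sub (exp_partial A t x N) (exp_partial A s x N))
    <= Rabs (t - s) * M * exp_sum (R * M) N * hs_norm x.
Proof.
  intros Ht Hs. assert (HR : 0 <= R) by (pose proof (Rabs_pos t); lra).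
  pose proof (norm_ge0 X x) as Hx.
  induction N as [| N IH]; [simpl; rewrite norm_sub_diag; lra |].
  cbn [exp_partial]. rewrite hs_sub_add_scal.
  eapply Rle_trans; [apply norm_triangle |]. rewrite norm_scal_real.
  assert (Hterm : Rabs (t ^ S N / INR (fact (S N)) - s ^ S N / INR (fact (S N)))
                    * hs_norm (Nat.iter (S N) A x)
                  <= Rabs (t - s) * M * ((R * M) ^ N / INR (fact N)) * hs_norm x).
  { pose proof (INR_fact_gt0 N).
    apply Rle_trans with (Rabs (t - s) * (R ^ N / INR (fact N)) * (M ^ S N * hs_norm x)).
    - apply Rmult_le_compat; try apply Rabs_pos; try apply norm_ge0.
      + apply Rabs_pow_div_fact_sub_le; assumption.
      + apply norm_iter_le.
    - rewrite Rpow_mult_distr. right. simpl. field. lra. }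
  simpl exp_sum. lra.
Qed.

End OperatorExponential.

Section ListSums.
Context {J : Type}.
Implicit Types (f g : J -> R) (l : list J).

Lemma sum_list_ext f g l : (forall j, f j = g j) -> sum_list f l = sum_list g l.
Proof. intro H. induction l; simpl; [reflexivity | rewrite H, IHl; reflexivity]. Qed.

Lemma sum_list_app f l1 l2 : sum_list f (l1 ++ l2) = sum_list f l1 + sum_list f l2.
Proof. induction l1; simpl; [ring | rewrite IHl1; ring]. Qed.

Lemma sum_list_le f g l : (forall j, In j l -> f j <= g j) -> sum_list f l <= sum_list g l.
Proof.
  induction l as [| a l IH]; simpl; intros H; [lra |].
  pose proof (H a (or_introl eq_refl)). assert (sum_list f l <= sum_list g l) by auto. lra.
Qed.

Lemma sum_list_ge0 f l : (forall j, 0 <= f j) -> 0 <= sum_list f l.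
Proof. intro H. induction l; simpl; [lra | pose proof (H a); lra]. Qed.

Lemma sum_list_plus f g l : sum_list (fun j => f j + g j) l = sum_list f l + sum_list g l.
Proof. induction l; simpl; [ring | rewrite IHl; ring]. Qed.

Lemma sum_list_scal f a l : sum_list (fun j => a * f j) l = a * sum_list f l.
Proof. induction l; simpl; [ring | rewrite IHl; ring]. Qed.

Lemma sum_list_const c l : sum_list (fun _ => c) l = c * INR (length l).
Proof. induction l; simpl length; [simpl; ring | rewrite S_INR; simpl; rewrite IHl; ring]. Qed.

Lemma sum_list_incl f (l L : list J) : NoDup l -> incl l L ->
  (forall j, 0 <= f j) -> sum_list f l <= sum_list f L.
Proof.
  intros Hn. revert L. induction Hn as [| a l Ha Hn IH]; intros L Hin Hf;
    [apply sum_list_ge0; assumption |].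
  destruct (in_split a L (Hin a (or_introl eq_refl))) as [L1 [L2 ->]].
  assert (sum_list f l <= sum_list f (L1 ++ L2)).
  { apply IH; [| assumption]. intros p Hp. specialize (Hin p (or_intror Hp)).
    apply in_app_or in Hin. apply in_or_app. destruct Hin as [| [<- |]]; auto. contradiction. }
  rewrite sum_list_app in *. simpl. lra.
Qed.

End ListSums.

Lemma sum_list_list_prod {J K : Type} (w : J * K -> R) (l : list J) (T : list K) :
  sum_list w (list_prod l T) = sum_list (fun g => sum_list (fun t => w (g, t)) T) l.
Proof.
  induction l as [| g l IH]; simpl; [reflexivity |].
  rewrite sum_list_app, IH. f_equal. clear IH.
  induction T as [| t T IHT]; simpl; [reflexivity | rewrite IHT; reflexivity].
Qed.

Lemma sum_list_comm {J K : Type} (f : J -> K -> R) (l : list J) (T : list K) :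
  sum_list (fun g => sum_list (f g) T) l = sum_list (fun t => sum_list (fun g => f g t) l) T.
Proof.
  induction l as [| g l IH]; simpl.
  - rewrite (sum_list_const 0 T). ring.
  - rewrite IH, <- sum_list_plus. reflexivity.
Qed.

Lemma NoDup_list_prod {J K : Type} (l : list J) (T : list K) :
  NoDup l -> NoDup T -> NoDup (list_prod l T).
Proof.
  intros Hl HT. induction Hl as [| g l Hg Hl IH]; simpl; [constructor |].
  apply NoDup_app; [| assumption |].
  - apply NoDup_map_NoDup_ForallPairs; [| assumption]. intros a b _ _ E. inversion E; reflexivity.
  - intros [g' t] H1 H2. apply in_map_iff in H1. destruct H1 as [t' [E _]]. inversion E; subst.
    apply in_prod_iff in H2. tauto.
Qed.

Lemma sum_list_Cabs2_cv {J : Type} (l : list J) (z : J -> nat -> Defs.C) (w : J -> Defs.C) :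
  (forall j, Un_cv (fun N => Re (z j N)) (Re (w j)) /\ Un_cv (fun N => Im (z j N)) (Im (w j))) ->
  Un_cv (fun N => sum_list (fun j => Cabs2 (z j N)) l) (sum_list (fun j => Cabs2 (w j)) l).
Proof.
  intro H. induction l as [| j l IH]; simpl.
  - intros eps He. exists O. intros. unfold Rdist. rewrite Rminus_0_r, Rabs_R0. lra.
  - apply CV_plus; [| exact IH]. unfold Cabs2. destruct (H j).
    apply CV_plus; apply CV_mult; assumption.
Qed.

Section RiemannIntegral.
Implicit Types (f g : R -> R) (a b c : R).

Lemma RInt_RiemannInt f a b (pr : Riemann_integrable f a b) : RInt f a b = RiemannInt pr.
Proof.
  unfold RInt. destruct (excluded_middle_informative _) as [H | H].
  - apply RiemannInt_P5.
  - exfalso. apply H. constructor. exact pr.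
Qed.

Lemma continuity_RiemannInt f a b : continuity f -> a <= b -> Riemann_integrable f a b.
Proof. intros Hf Hab. apply continuity_implies_RiemannInt; [assumption | intros; apply Hf]. Qed.

Lemma RInt_Chasles f a b c : continuity f -> a <= b -> b <= c ->
  RInt f a b + RInt f b c = RInt f a c.
Proof.
  intros Hf H1 H2.
  rewrite (RInt_RiemannInt f a b (continuity_RiemannInt f a b Hf H1)),
    (RInt_RiemannInt f b c (continuity_RiemannInt f b c Hf H2)),
    (RInt_RiemannInt f a c (continuity_RiemannInt f a c Hf (Rle_trans _ _ _ H1 H2))).
  apply RiemannInt_P26.
Qed.

Lemma RInt_le f g a b : continuity f -> continuity g -> a <= b ->
  (forall t, a <= t <= b -> f t <= g t) -> RInt f a b <= RInt g a b.
Proof.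
  intros Hf Hg Hab H.
  rewrite (RInt_RiemannInt f a b (continuity_RiemannInt f a b Hf Hab)),
    (RInt_RiemannInt g a b (continuity_RiemannInt g a b Hg Hab)).
  apply RiemannInt_P19; [assumption |]. intros t Ht; apply H; lra.
Qed.

Lemma continuity_cst c : continuity (fun _ => c).
Proof. apply continuity_const. intros u v; reflexivity. Qed.

Lemma RInt_cst c a b : a <= b -> RInt (fun _ => c) a b = c * (b - a).
Proof.
  intro Hab. rewrite (RInt_RiemannInt _ a b (continuity_RiemannInt _ a b (continuity_cst c) Hab)).
  apply (RiemannInt_P15 (c := c)).
Qed.

Lemma RInt_ge0 f a b : continuity f -> a <= b -> (forall t, 0 <= f t) -> 0 <= RInt f a b.
Proof.
  intros Hf Hab H. apply Rle_trans with (RInt (fun _ => 0) a b).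
  - rewrite RInt_cst by assumption. lra.
  - apply RInt_le; auto using continuity_cst.
Qed.

Lemma RInt_plus f g a b : continuity f -> continuity g -> a <= b ->
  RInt (fun t => f t + g t) a b = RInt f a b + RInt g a b.
Proof.
  intros Hf Hg Hab.
  assert (Hfg : continuity (fun t => f t + 1 * g t))
    by apply (continuity_plus _ _ Hf (continuity_mult _ _ (continuity_cst 1) Hg)).
  replace (fun t => f t + g t) with (fun t => f t + 1 * g t)
    by (apply functional_extensionality; intro; ring).
  rewrite (RInt_RiemannInt _ a b (continuity_RiemannInt _ a b Hfg Hab)),
    (RInt_RiemannInt f a b (continuity_RiemannInt f a b Hf Hab)),
    (RInt_RiemannInt g a b (continuity_RiemannInt g a b Hg Hab)).
  rewrite (RiemannInt_P13 (continuity_RiemannInt f a b Hf Hab)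
                          (continuity_RiemannInt g a b Hg Hab)).
  ring.
Qed.

Lemma continuity_sum_list {J : Type} (f : J -> R -> R) (l : list J) :
  (forall j, In j l -> continuity (f j)) -> continuity (fun t => sum_list (fun j => f j t) l).
Proof.
  induction l as [| j l IH]; simpl; intros H; [apply continuity_cst |].
  apply (continuity_plus (f j) (fun t => sum_list (fun j => f j t) l)); auto.
Qed.

Lemma RInt_sum_list {J : Type} (f : J -> R -> R) (l : list J) a b : a <= b ->
  (forall j, In j l -> continuity (f j)) ->
  RInt (fun t => sum_list (fun j => f j t) l) a b = sum_list (fun j => RInt (f j) a b) l.
Proof.
  intros Hab. induction l as [| j l IH]; simpl; intros H.
  - rewrite RInt_cst by assumption. ring.
  - rewrite RInt_plus; auto using continuity_sum_list. rewrite IH; auto.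
Qed.

End RiemannIntegral.

Lemma continuity_pt_sqr_Lipschitz f t0 K : 0 <= K ->
  (forall s, Rabs (s - t0) <= 1 -> (f s - f t0) ^ 2 <= K ^ 2 * (s - t0) ^ 2) ->
  continuity_pt f t0.
Proof.
  intros HK H eps Heps. exists (Rmin 1 (eps / (K + 1))). split.
  { apply Rmin_pos; [lra | apply Rdiv_lt_0_compat; lra]. }
  intros s [_ Hs]. simpl in *. unfold Rdist in *.
  pose proof (Rmin_l 1 (eps / (K + 1))). pose proof (Rmin_r 1 (eps / (K + 1))).
  assert (Hlip : Rabs (f s - f t0) <= K * Rabs (s - t0)).
  { rewrite <- (Rabs_pos_eq K) at 1 by assumption. rewrite <- Rabs_mult.
    apply Rsqr_le_abs_0. unfold Rsqr. specialize (H s ltac:(lra)). simpl in H. nra. }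
  eapply Rle_lt_trans; [exact Hlip |].
  apply Rle_lt_trans with (K * (eps / (K + 1))); [apply Rmult_le_compat_l; lra |].
  apply Rlt_le_trans with ((K + 1) * (eps / (K + 1))); [| right; field; lra].
  apply Rmult_lt_compat_r; [apply Rdiv_lt_0_compat |]; lra.
Qed.

Fixpoint chain (P : R -> R -> Prop) (T : list R) : Prop :=
  match T with
  | a :: ((c :: _) as r) => P a c /\ chain P r
  | _ => True
  end.

Fixpoint chain_upto (P : R -> R -> Prop) (T : list R) (b : R) : Prop :=
  match T with nil => True | t :: r => P t (hd b r) /\ chain_upto P r b end.

Section Chains.
Implicit Types (P Q : R -> R -> Prop) (T : list R).

Lemma chain_nth P T :
  (forall i, (S i < length T)%nat -> P (nth i T 0) (nth (S i) T 0)) -> chain P T.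
Proof.
  induction T as [| a r IH]; intros H; [exact I |].
  destruct r as [| c r']; [exact I |]. split.
  - apply (H 0%nat). simpl; lia.
  - apply IH. intros i Hi. apply (H (S i)). simpl in *; lia.
Qed.

Lemma chain_upto_nth P T b : T <> nil ->
  (forall i, (S i < length T)%nat -> P (nth i T 0) (nth (S i) T 0)) ->
  P (nth (length T - 1) T 0) b -> chain_upto P T b.
Proof.
  induction T as [| a r IH]; intros Hne H Hl; [contradiction |].
  destruct r as [| c r']; [simpl in *; tauto |]. split.
  - apply (H 0%nat). simpl; lia.
  - apply IH; [discriminate | |].
    + intros i Hi. apply (H (S i)). simpl in *; lia.
    + simpl length in *. replace (S (length r') - 1)%nat with (length r') by lia.
      replace (S (S (length r')) - 1)%nat with (S (length r')) in Hl by lia. exact Hl.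
Qed.

Lemma chain_impl P Q T : (forall a b, P a b -> Q a b) -> chain P T -> chain Q T.
Proof.
  intros HPQ. induction T as [| a r IH]; [auto |]. destruct r as [| c r']; [auto |].
  simpl. intros [H1 H2]. split; [auto | exact (IH H2)].
Qed.

Lemma chain_lt_gap T : chain Rlt T -> exists d, d > 0 /\ chain (fun a b => a + d <= b) T.
Proof.
  induction T as [| a r IH]; intros H; [exists 1; split; [lra | exact I] |].
  destruct r as [| c r']; [exists 1; split; [lra | exact I] |].
  destruct H as [H1 H2]. destruct (IH H2) as [d [Hd Hc]].
  exists (Rmin d (c - a)). split; [apply Rmin_pos; lra |].
  pose proof (Rmin_l d (c - a)). pose proof (Rmin_r d (c - a)). split; [lra |].
  eapply chain_impl; [| exact Hc]. intros x y Hxy. lra.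
Qed.

Lemma chain_gap_In d a r : 0 <= d -> chain (fun a b => a + d <= b) (a :: r) ->
  forall t, In t r -> a + d <= t.
Proof.
  intros Hd. revert a. induction r as [| c r' IH]; intros a H t Ht; [destruct Ht |].
  destruct H as [H1 H2]. destruct Ht as [<- | Ht]; [assumption |].
  pose proof (IH c H2 t Ht). lra.
Qed.

Lemma chain_gap_NoDup d T : 0 < d -> chain (fun a b => a + d <= b) T -> NoDup T.
Proof.
  intros Hd. induction T as [| a r IH]; intros H; constructor.
  - intro Hin. pose proof (chain_gap_In d a r (Rlt_le _ _ Hd) H a Hin). lra.
  - apply IH. destruct r; [exact I | exact (proj2 H)].
Qed.

Lemma chain_upto_le T b : chain_upto Rle T b -> forall t, In t T -> hd b T <= t <= b.
Proof.
  induction T as [| a r IH]; intros H t Ht; [destruct Ht |]. destruct H as [H1 H2].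
  assert (Hr : forall u, In u r -> hd b r <= u <= b) by (apply IH; assumption).
  assert (Hh : hd b r <= b) by (destruct r as [| c r']; [simpl; lra | apply Hr; left; reflexivity]).
  simpl. destruct Ht as [<- | Ht]; [lra |]. specialize (Hr t Ht). lra.
Qed.

End Chains.

Section SampleSets.
Variable tau : R.

Lemma sample_set_chain_upto T : sample_set tau T -> chain_upto Rle T tau.
Proof.
  intros [Hl [_ [Hinc Hlast]]]. apply chain_upto_nth; [intros ->; simpl in Hl; lia | | assumption].
  intros i Hi. left. apply Hinc. assumption.
Qed.

Lemma sample_set_hd T : sample_set tau T -> hd tau T = 0.
Proof. intros [Hl [H0 _]]. destruct T; [simpl in Hl; lia | exact H0]. Qed.

Lemma sample_set_In T : sample_set tau T -> forall t, In t T -> 0 <= t <= tau.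
Proof.
  intros HT t Ht. rewrite <- (sample_set_hd T HT). apply chain_upto_le; [| assumption].
  apply sample_set_chain_upto. assumption.
Qed.

Lemma sample_set_gap T : sample_set tau T ->
  exists d, d > 0 /\ chain (fun a b => a + d <= b) T.
Proof. intros [_ [_ [Hinc _]]]. apply chain_lt_gap, chain_nth. assumption. Qed.

Lemma sample_set_NoDup T : sample_set tau T -> NoDup T.
Proof.
  intro HT. destruct (sample_set_gap T HT) as [d [Hd Hc]]. exact (chain_gap_NoDup d T Hd Hc).
Qed.

Lemma mesh_lt_chain_upto delta T : sample_set tau T -> mesh_lt tau delta T ->
  chain_upto (fun a b => a <= b /\ b - a < delta) T tau.
Proof.
  intros [Hl [_ [Hinc Hlast]]] [Hm Hml].
  apply chain_upto_nth; [intros ->; simpl in Hl; lia | |].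
  - intros i Hi. specialize (Hinc i Hi). specialize (Hm i Hi). apply Rabs_def2 in Hm. lra.
  - apply Rabs_def2 in Hml. lra.
Qed.

End SampleSets.

Definition uniform_grid (N : nat) (h : R) : list R := map (fun i => INR i * h) (seq 0 N).

Lemma uniform_grid_length N h : length (uniform_grid N h) = N.
Proof. unfold uniform_grid. rewrite length_map, length_seq. reflexivity. Qed.

Lemma uniform_grid_nth N h i : (i < N)%nat -> nth i (uniform_grid N h) 0 = INR i * h.
Proof.
  intro Hi. unfold uniform_grid.
  rewrite nth_indep with (d' := INR 0 * h) by (rewrite length_map, length_seq; assumption).
  rewrite (map_nth (fun i => INR i * h)), seq_nth by assumption. reflexivity.
Qed.

Lemma uniform_grid_sample tau delta N h : (1 <= N)%nat -> 0 < h < delta -> INR N * h = tau ->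
  sample_set tau (uniform_grid N h) /\ mesh_lt tau delta (uniform_grid N h).
Proof.
  intros HN Hh Htau.
  assert (Hlast : INR (N - 1) * h = tau - h) by (rewrite minus_INR by assumption; simpl; lra).
  unfold sample_set, mesh_lt. rewrite uniform_grid_length.
  split; [split; [| split; [| split]] | split].
  - assumption.
  - rewrite uniform_grid_nth by lia. simpl. ring.
  - intros i Hi. rewrite !uniform_grid_nth by lia. rewrite S_INR. lra.
  - rewrite uniform_grid_nth by lia. lra.
  - intros i Hi. rewrite !uniform_grid_nth by lia. rewrite S_INR.
    replace ((INR i + 1) * h - INR i * h) with h by ring. rewrite Rabs_pos_eq; lra.
  - rewrite uniform_grid_nth, Hlast by lia.
    replace (tau - (tau - h)) with h by ring. rewrite Rabs_pos_eq; lra.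
Qed.

Lemma exists_fine_sample_set tau delta : 0 < tau -> 0 < delta ->
  exists T, sample_set tau T /\ mesh_lt tau delta T.
Proof.
  intros Htau Hd. destruct (archimed (tau / delta)) as [Hup _].
  assert (Hq : 0 < tau / delta) by (apply Rdiv_lt_0_compat; lra).
  assert (Hpos : (0 < up (tau / delta))%Z) by (apply lt_IZR; simpl; lra).
  set (N := Z.to_nat (up (tau / delta))).
  assert (HN : INR N = IZR (up (tau / delta)))
    by (unfold N; rewrite INR_IZR_INZ, Z2Nat.id by lia; reflexivity).
  assert (HNpos : 0 < INR N) by lra.
  exists (uniform_grid N (tau / INR N)). apply uniform_grid_sample.
  - unfold N. lia.
  - split; [apply Rdiv_lt_0_compat; lra |].
    apply Rmult_lt_reg_r with (INR N); [lra |].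
    replace (tau / INR N * INR N) with tau by (field; lra).
    apply Rmult_lt_reg_l with (/ delta); [apply Rinv_0_lt_compat; lra |].
    replace (/ delta * tau) with (tau / delta) by (unfold Rdiv; ring).
    replace (/ delta * (delta * INR N)) with (INR N) by (field; lra). lra.
  - field. lra.
Qed.

(* The window [[shrink tau s t, shrink tau s t + s]] is the part of [[0, tau]] charged to
   the sample point [t]. *)
Definition shrink (tau s t : R) : R := t * (tau - s) / tau.

Lemma shrink_bounds tau s t : 0 < s < tau -> 0 <= t <= tau ->
  0 <= shrink tau s t /\ t - s <= shrink tau s t <= t /\ shrink tau s t + s <= tau.
Proof.
  intros Hs Ht. unfold shrink.
  replace (t * (tau - s) / tau) with (t - s * (t / tau)) by (field; lra).
  assert (0 <= t / tau <= 1).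
  { split; [apply Rmult_le_pos; [lra | left; apply Rinv_0_lt_compat; lra] |].
    apply Rmult_le_reg_r with tau; [lra |]. unfold Rdiv. rewrite Rmult_assoc, Rinv_l; lra. }
  assert (t = t / tau * tau) by (field; lra).
  nra.
Qed.

Lemma shrink_gap tau s d t t' : 0 < s < tau -> s * tau <= d * (tau - s) -> t + d <= t' ->
  shrink tau s t + s <= shrink tau s t'.
Proof.
  intros Hs Hsd Htt. unfold shrink.
  apply Rmult_le_reg_r with tau; [lra |].
  replace ((t * (tau - s) / tau + s) * tau) with (t * (tau - s) + s * tau) by (field; lra).
  replace (t' * (tau - s) / tau * tau) with (t' * (tau - s)) by (field; lra).
  nra.
Qed.

Section IntegralVersusSampleSum.
Variables (F : R -> R) (tau c : R).
Hypothesis F_cont : continuity F.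
Hypothesis F_ge0 : forall t, 0 <= F t.
Hypothesis c_ge0 : 0 <= c.

Lemma RInt_le_sample_sum delta :
  0 <= tau -> (forall u t, 0 <= u <= tau -> 0 <= t <= tau -> F u <= 2 * F t + c * (u - t) ^ 2) ->
  forall T, chain_upto (fun a b => a <= b /\ b - a < delta) T tau ->
  (forall t, In t T -> 0 <= t <= tau) ->
  RInt F (hd tau T) tau <= 2 * delta * sum_list F T + c * delta ^ 2 * (tau - hd tau T).
Proof.
  intros Htau HF. induction T as [| t r IH]; intros Hch Hin.
  { simpl. pose proof (RInt_Chasles F tau tau tau F_cont (Rle_refl _) (Rle_refl _)). lra. }
  destruct Hch as [[H1 H2] Hch]. simpl hd. simpl sum_list.
  assert (Ht : 0 <= t <= tau) by (apply Hin; left; reflexivity).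
  assert (Hr : forall u, In u r -> 0 <= u <= tau) by (intros; apply Hin; right; assumption).
  assert (Hh : hd tau r <= tau) by (destruct r; simpl; [lra | apply Hr; left; reflexivity]).
  rewrite <- (RInt_Chasles F t (hd tau r) tau F_cont H1 Hh).
  assert (Hd : 0 <= delta) by lra.
  assert (Hstep : RInt F t (hd tau r) <= (2 * F t + c * delta ^ 2) * (hd tau r - t)).
  { rewrite <- RInt_cst by assumption.
    apply RInt_le; [assumption | apply continuity_cst | assumption |]. intros u Hu.
    eapply Rle_trans; [apply (HF u t); lra |].
    apply Rplus_le_compat_l, Rmult_le_compat_l; [assumption |]. apply pow_incr. lra. }
  specialize (IH Hch Hr). pose proof (F_ge0 t).
  assert (0 <= c * delta ^ 2) by (apply Rmult_le_pos; [assumption | apply pow2_ge_0]).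
  nra.
Qed.

Lemma sample_sum_le_RInt s d :
  0 < s < tau -> s * tau <= d * (tau - s) -> 0 <= d ->
  (forall u t, 0 <= u <= tau -> 0 <= t <= tau -> F t / 2 - c * (u - t) ^ 2 <= F u) ->
  forall T lo, chain (fun a b => a + d <= b) T -> (forall t, In t T -> 0 <= t <= tau) ->
  (forall t, In t T -> lo <= shrink tau s t) -> lo <= tau ->
  sum_list (fun t => s * (F t / 2 - c * s ^ 2)) T <= RInt F lo tau.
Proof.
  intros Hs Hsd Hd HF. induction T as [| t r IH]; intros lo Hch Hin Hlo Hlt.
  { simpl. apply RInt_ge0; assumption. }
  simpl sum_list.
  assert (Ht : 0 <= t <= tau) by (apply Hin; left; reflexivity).
  set (p := shrink tau s t).
  destruct (shrink_bounds tau s t Hs Ht) as [Hp0 [Hpt Hps]]. fold p in Hp0, Hpt, Hps.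
  assert (Hlop : lo <= p) by (apply Hlo; left; reflexivity).
  rewrite <- (RInt_Chasles F lo p tau F_cont Hlop ltac:(lra)).
  rewrite <- (RInt_Chasles F p (p + s) tau F_cont ltac:(lra) Hps).
  assert (Hlow : 0 <= RInt F lo p) by (apply RInt_ge0; assumption).
  (* on the window [p, p + s] every point is within [s] of [t] *)
  assert (Hwin : s * (F t / 2 - c * s ^ 2) <= RInt F p (p + s)).
  { replace (s * (F t / 2 - c * s ^ 2)) with ((F t / 2 - c * s ^ 2) * (p + s - p)) by ring.
    rewrite <- RInt_cst by lra.
    apply RInt_le; [apply continuity_cst | assumption | lra |]. intros u Hu.
    eapply Rle_trans; [| apply (HF u t); lra].
    apply Rplus_le_compat_l, Ropp_le_contravar, Rmult_le_compat_l; [assumption |].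
    rewrite <- (pow2_abs (u - t)). apply pow_incr. split; [apply Rabs_pos | apply Rabs_le; lra]. }
  assert (Hrest : sum_list (fun t0 => s * (F t0 / 2 - c * s ^ 2)) r <= RInt F (p + s) tau).
  { apply IH; [destruct r; [exact I | exact (proj2 Hch)] | intros; apply Hin; right; auto | |].
    - intros t' Ht'. apply (shrink_gap tau s d); try assumption.
      apply (chain_gap_In d t r); assumption.
    - assumption. }
  simpl pow in *. lra.
Qed.

End IntegralVersusSampleSum.

Section SemicontinuousFrames.
Variable X : HilbertSpace.
Variables (A Astar : X -> X) (E : R -> X -> X) (M Cb : R) (G : X -> Prop).
Hypothesis M_ge0 : 0 <= M.
Hypothesis A_bounded : forall x, hs_norm (A x) <= M * hs_norm x.
Hypothesis A_adjoint : is_adjoint A Astar.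
Hypothesis E_exp : is_exp Astar E.
Hypothesis Cb_ge0 : 0 <= Cb.
Hypothesis G_bessel : forall y l, NoDup l -> Forall G l ->
  sum_list (fun g => Cabs2 (hs_inner y g)) l <= Cb * hs_norm y ^ 2.

Lemma bessel_sum_limit_le (y : nat -> X) (z : X -> Defs.C) (l : list X) (K : R) :
  NoDup l -> Forall G l ->
  (forall g, Un_cv (fun N => Re (hs_inner (y N) g)) (Re (z g)) /\
             Un_cv (fun N => Im (hs_inner (y N) g)) (Im (z g))) ->
  (forall N, hs_norm (y N) <= K) ->
  sum_list (fun g => Cabs2 (z g)) l <= Cb * K ^ 2.
Proof.
  intros Hn Hf Hcv HK.
  apply (Un_cv_le_bound _ _ _ (sum_list_Cabs2_cv l (fun g N => hs_inner (y N) g) z Hcv)).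
  intro N. eapply Rle_trans; [apply G_bessel; assumption |].
  apply Rmult_le_compat_l; [assumption |]. apply pow_incr. split; [apply norm_ge0 | apply HK].
Qed.

Lemma exp_bessel_le t R x l : Rabs t <= R -> NoDup l -> Forall G l ->
  sum_list (fun g => Cabs2 (hs_inner x (E t g))) l <= Cb * (exp (R * M) * hs_norm x) ^ 2.
Proof.
  intros Ht Hn Hf. assert (HR : 0 <= R) by (pose proof (Rabs_pos t); lra).
  apply (bessel_sum_limit_le (exp_partial A t x)); try assumption.
  - intro g. destruct (cv_X_inner _ _ _ x (E_exp t g)) as [HRe HIm].
    pose proof (inner_exp_partial_adjoint X A Astar A_adjoint t) as Hadj.
    split; [apply (Un_cv_ext _ _ (fun N => f_equal Re (Hadj N x g)) _ HRe)
           | apply (Un_cv_ext _ _ (fun N => f_equal Im (Hadj N x g)) _ HIm)].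
  - intro N. eapply Rle_trans; [exact (norm_exp_partial_le X A M M_ge0 A_bounded t R x N Ht) |].
    apply Rmult_le_compat_r; [apply norm_ge0 |]. apply exp_sum_le_exp. nra.
Qed.

Lemma exp_bessel_sub_le t s R x l : Rabs t <= R -> Rabs s <= R -> NoDup l -> Forall G l ->
  sum_list (fun g => Cabs2 (Csub (hs_inner x (E t g)) (hs_inner x (E s g)))) l
    <= Cb * (Rabs (t - s) * M * exp (R * M) * hs_norm x) ^ 2.
Proof.
  intros Ht Hs Hn Hf. assert (HR : 0 <= R) by (pose proof (Rabs_pos t); lra).
  apply (bessel_sum_limit_le (fun N => hs_sub (exp_partial A t x N) (exp_partial A s x N)));
    try assumption.
  - intro g. destruct (cv_X_inner _ _ _ x (E_exp t g)), (cv_X_inner _ _ _ x (E_exp s g)).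
    pose proof (inner_exp_partial_adjoint X A Astar A_adjoint) as Hadj.
    split; eapply Un_cv_ext; try (apply CV_minus; eassumption);
      intro N; simpl; unfold hs_sub; inner_simpl; rewrite !Hadj; reflexivity.
  - intro N.
    eapply Rle_trans; [exact (norm_exp_partial_sub_le X A M M_ge0 A_bounded t s R x N Ht Hs) |].
    pose proof (norm_ge0 X x). pose proof (Rabs_pos (t - s)).
    pose proof (exp_sum_le_exp (R * M) N ltac:(nra)). pose proof (exp_sum_ge0 (R * M) N ltac:(nra)).
    apply Rmult_le_compat_r; [assumption |]. apply Rmult_le_compat_l; nra.
Qed.

Variable tau : R.
Hypothesis tau_gt0 : 0 < tau.

Definition orbit_sum (x : X) (l : list X) (t : R) : R :=
  sum_list (fun g => Cabs2 (hs_inner x (E t g))) l.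

Definition orbit_bound : R := Cb * exp (tau * M) ^ 2.
Definition orbit_lipschitz (r : R) : R := Cb * (M * exp (r * M)) ^ 2.

Lemma orbit_bound_ge0 : 0 <= orbit_bound.
Proof. unfold orbit_bound. apply Rmult_le_pos; [assumption | apply pow2_ge_0]. Qed.

Lemma orbit_lipschitz_ge0 r : 0 <= orbit_lipschitz r.
Proof. unfold orbit_lipschitz. apply Rmult_le_pos; [assumption | apply pow2_ge_0]. Qed.

Lemma orbit_sum_ge0 x l t : 0 <= orbit_sum x l t.
Proof. apply sum_list_ge0. intro; apply Cabs2_ge0. Qed.

Lemma orbit_sum_le x l t : NoDup l -> Forall G l -> 0 <= t <= tau ->
  orbit_sum x l t <= orbit_bound * hs_norm x ^ 2.
Proof.
  intros Hn Hf Ht. eapply Rle_trans.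
  - apply (exp_bessel_le t tau); [rewrite Rabs_pos_eq; lra | assumption ..].
  - unfold orbit_bound. right. ring.
Qed.

Lemma orbit_sum_sub_le x l u t R : NoDup l -> Forall G l -> Rabs u <= R -> Rabs t <= R ->
  sum_list (fun g => Cabs2 (Csub (hs_inner x (E u g)) (hs_inner x (E t g)))) l
    <= orbit_lipschitz R * hs_norm x ^ 2 * (u - t) ^ 2.
Proof.
  intros Hn Hf Hu Ht. eapply Rle_trans.
  - apply (exp_bessel_sub_le u t R); assumption.
  - unfold orbit_lipschitz. rewrite <- (pow2_abs (u - t)). right. ring.
Qed.

Lemma continuity_Cabs2_orbit x g : G g -> continuity (fun t => Cabs2 (hs_inner x (E t g))).
Proof.
  intros Hg t0. set (R := Rabs t0 + 1).
  set (K := sqrt (orbit_lipschitz R) * hs_norm x).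
  assert (HK : 0 <= K) by (apply Rmult_le_pos; [apply sqrt_pos | apply norm_ge0]).
  assert (Hdiff : forall s, Rabs (s - t0) <= 1 ->
    Cabs2 (Csub (hs_inner x (E s g)) (hs_inner x (E t0 g))) <= K ^ 2 * (s - t0) ^ 2).
  { intros s Hs.
    replace (K ^ 2) with (orbit_lipschitz R * hs_norm x ^ 2)
      by (unfold K; rewrite Rpow_mult_distr, pow2_sqrt by apply orbit_lipschitz_ge0; reflexivity).
    pose proof (orbit_sum_sub_le x (g :: nil) s t0 R) as H. simpl in H. rewrite Rplus_0_r in H.
    apply H.
    - repeat constructor. intros [].
    - repeat constructor. assumption.
    - unfold R. pose proof (Rabs_triang (s - t0) t0).
      replace (s - t0 + t0) with s in * by ring. lra.
    - unfold R. lra. }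
  unfold Cabs2. apply continuity_pt_plus; apply continuity_pt_mult;
    apply (continuity_pt_sqr_Lipschitz _ t0 K HK); intros s Hs;
    (eapply Rle_trans; [| apply (Hdiff s Hs)]);
    first [apply (Re_sqr_le_Cabs2 (Csub _ _)) | apply (Im_sqr_le_Cabs2 (Csub _ _))].
Qed.

Lemma continuity_orbit_sum x l : Forall G l -> continuity (orbit_sum x l).
Proof.
  intro Hf. apply (continuity_sum_list (fun g t => Cabs2 (hs_inner x (E t g)))).
  intros g Hg. apply continuity_Cabs2_orbit. rewrite Forall_forall in Hf. auto.
Qed.

Lemma RInt_orbit_sum x l : Forall G l ->
  sum_list (fun g => RInt (fun t => Cabs2 (hs_inner x (E t g))) 0 tau) l
    = RInt (orbit_sum x l) 0 tau.
Proof.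
  intro Hf. unfold orbit_sum. symmetry.
  apply (RInt_sum_list (fun g t => Cabs2 (hs_inner x (E t g)))); [lra |].
  intros g Hg. apply continuity_Cabs2_orbit. rewrite Forall_forall in Hf. auto.
Qed.

Lemma orbit_sum_le_shift x l u t : NoDup l -> Forall G l -> 0 <= u <= tau -> 0 <= t <= tau ->
  orbit_sum x l u <= 2 * orbit_sum x l t + 2 * orbit_lipschitz tau * hs_norm x ^ 2 * (u - t) ^ 2.
Proof.
  intros Hn Hf Hu Ht. unfold orbit_sum.
  pose proof (orbit_sum_sub_le x l u t tau Hn Hf ltac:(rewrite Rabs_pos_eq; lra)
                                                  ltac:(rewrite Rabs_pos_eq; lra)).
  eapply Rle_trans.
  { apply (sum_list_le _ (fun g => 2 * Cabs2 (hs_inner x (E t g))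
                                   + 2 * Cabs2 (Csub (hs_inner x (E u g)) (hs_inner x (E t g))))).
    intros; apply Cabs2_le_sub. }
  rewrite sum_list_plus, !sum_list_scal. lra.
Qed.


Definition sample_index (T : list R) (p : X * R) : Prop := G (fst p) /\ In (snd p) T.
Definition sample_weight (x : X) (p : X * R) : R := Cabs2 (hs_inner x (E (snd p) (fst p))).

Lemma sum_sample_weight_list_prod x l T :
  sum_list (sample_weight x) (list_prod l T) = sum_list (orbit_sum x l) T.
Proof. rewrite sum_list_list_prod. apply (sum_list_comm (fun g t => sample_weight x (g, t))). Qed.

Definition hs_eq_dec (x y : X) : {x = y} + {x <> y} := excluded_middle_informative (x = y).

Definition generators (lp : list (X * R)) : list X := nodup hs_eq_dec (map fst lp).

Lemma generators_NoDup lp : NoDup (generators lp).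
Proof. apply NoDup_nodup. Qed.

Lemma generators_Forall T lp : Forall (sample_index T) lp -> Forall G (generators lp).
Proof.
  rewrite !Forall_forall. intros Hf g Hg. apply nodup_In, in_map_iff in Hg.
  destruct Hg as [p [<- Hp]]. apply (Hf p Hp).
Qed.

Lemma sample_sum_le_orbit_sums T lp x : NoDup lp -> Forall (sample_index T) lp ->
  sum_list (sample_weight x) lp <= sum_list (orbit_sum x (generators lp)) T.
Proof.
  intros Hn Hf. rewrite <- sum_sample_weight_list_prod.
  apply sum_list_incl; [assumption | | intro; apply Cabs2_ge0].
  intros [g t] Hp. rewrite Forall_forall in Hf. destruct (Hf _ Hp) as [_ Ht].
  apply in_prod; [apply nodup_In, in_map_iff; exists (g, t); auto | assumption].
Qed.

Lemma sample_frame_bessel T : (forall t, In t T -> 0 <= t <= tau) ->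
  is_bessel (sample_index T) (fun p => E (snd p) (fst p)).
Proof.
  intro HT. exists (INR (length T) * orbit_bound). intros x lp Hn Hf.
  eapply Rle_trans; [apply (sample_sum_le_orbit_sums T); assumption |].
  eapply Rle_trans.
  - apply (sum_list_le _ (fun _ => orbit_bound * hs_norm x ^ 2)). intros t Ht.
    apply orbit_sum_le; [apply generators_NoDup | apply (generators_Forall T) | auto]; assumption.
  - rewrite sum_list_const. right; ring.
Qed.

Lemma sum_RInt_orbit_le x l : NoDup l -> Forall G l ->
  sum_list (fun g => RInt (fun t => Cabs2 (hs_inner x (E t g))) 0 tau) l
    <= tau * orbit_bound * hs_norm x ^ 2.
Proof.
  intros Hn Hf. rewrite RInt_orbit_sum by assumption.
  eapply Rle_trans.
  - apply (RInt_le _ (fun _ => orbit_bound * hs_norm x ^ 2));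
      [apply continuity_orbit_sum; assumption | apply continuity_cst | lra |].
    intros t Ht. apply orbit_sum_le; assumption.
  - rewrite RInt_cst by lra. right; ring.
Qed.

Lemma RInt_orbit_sum_le_sample_sum x l T delta : NoDup l -> Forall G l ->
  sample_set tau T -> mesh_lt tau delta T ->
  RInt (orbit_sum x l) 0 tau
    <= 2 * delta * sum_list (orbit_sum x l) T
       + 2 * orbit_lipschitz tau * hs_norm x ^ 2 * delta ^ 2 * tau.
Proof.
  intros Hn Hf HT Hm.
  pose proof (RInt_le_sample_sum (orbit_sum x l) tau (2 * orbit_lipschitz tau * hs_norm x ^ 2)
    (continuity_orbit_sum x l Hf) (orbit_sum_ge0 x l)
    ltac:(pose proof (orbit_lipschitz_ge0 tau); pose proof (pow2_ge_0 (hs_norm x)); nra)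
    delta ltac:(lra) (fun u t Hu Ht => orbit_sum_le_shift x l u t Hn Hf Hu Ht) T
    (mesh_lt_chain_upto tau delta T HT Hm) (sample_set_In tau T HT)) as H.
  rewrite (sample_set_hd tau T HT), Rminus_0_r in H. exact H.
Qed.

Lemma fine_sample_lower c1 delta T : 0 < c1 -> 0 < delta ->
  4 * orbit_lipschitz tau * delta ^ 2 * tau <= c1 ->
  (forall x, sum_ge G (fun g => RInt (fun t => Cabs2 (hs_inner x (E t g))) 0 tau)
                    (c1 * hs_norm x ^ 2)) ->
  sample_set tau T -> mesh_lt tau delta T ->
  forall x, sum_ge (sample_index T) (sample_weight x) (c1 / (4 * delta) * hs_norm x ^ 2).
Proof.
  intros Hc1 Hd Hsmall Hsc HT Hm x eps Heps.
  destruct (Hsc x (2 * delta * eps)) as [l [Hn [Hf Hgt]]]; [nra |].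
  rewrite RInt_orbit_sum in Hgt by assumption.
  pose proof (RInt_orbit_sum_le_sample_sum x l T delta Hn Hf HT Hm).
  set (L := orbit_lipschitz tau) in *.
  exists (list_prod l T).
  split; [apply NoDup_list_prod; [| apply (sample_set_NoDup tau)]; assumption |].
  split.
  - apply Forall_forall. intros [g t] Hp. apply in_prod_iff in Hp. rewrite Forall_forall in Hf.
    split; [apply Hf |]; tauto.
  - rewrite sum_sample_weight_list_prod.
    assert (H2L : 2 * L * hs_norm x ^ 2 * delta ^ 2 * tau <= c1 / 2 * hs_norm x ^ 2).
    { replace (2 * L * hs_norm x ^ 2 * delta ^ 2 * tau)
        with (4 * L * delta ^ 2 * tau * (hs_norm x ^ 2 / 2)) by field.
      replace (c1 / 2 * hs_norm x ^ 2) with (c1 * (hs_norm x ^ 2 / 2)) by field.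
      apply Rmult_le_compat_r; [pose proof (pow2_ge_0 (hs_norm x)); lra | assumption]. }
    apply Rmult_lt_reg_l with (2 * delta); [lra |].
    replace (2 * delta * (c1 / (4 * delta) * hs_norm x ^ 2 - eps))
      with (c1 / 2 * hs_norm x ^ 2 - 2 * delta * eps) by (field; lra).
    lra.
Qed.

Lemma sample_sum_le_RInt_orbit_sum x l T s d : NoDup l -> Forall G l -> sample_set tau T ->
  chain (fun a b => a + d <= b) T -> 0 < s <= tau / 2 -> s * tau <= d * (tau - s) -> 0 <= d ->
  s / 2 * sum_list (orbit_sum x l) T
    - s * (orbit_lipschitz tau * hs_norm x ^ 2) * s ^ 2 * INR (length T)
    <= RInt (orbit_sum x l) 0 tau.
Proof.
  intros Hn Hf HT Hgap Hs Hsd Hd. set (L := orbit_lipschitz tau).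
  replace (s / 2 * sum_list (orbit_sum x l) T - s * (L * hs_norm x ^ 2) * s ^ 2 * INR (length T))
    with (sum_list (fun t => s * (orbit_sum x l t / 2 - L * hs_norm x ^ 2 * s ^ 2)) T).
  2:{ rewrite (sum_list_ext _
        (fun t => s / 2 * orbit_sum x l t + - (s * (L * hs_norm x ^ 2) * s ^ 2)))
        by (intro; field).
      rewrite sum_list_plus, sum_list_scal, sum_list_const. ring. }
  apply (sample_sum_le_RInt _ tau (L * hs_norm x ^ 2)) with (d := d);
    try apply continuity_orbit_sum; try apply orbit_sum_ge0; try assumption; try lra.
  - apply Rmult_le_pos; [apply orbit_lipschitz_ge0 | apply pow2_ge_0].
  - intros u t Hu Ht. pose proof (orbit_sum_le_shift x l t u Hn Hf Ht Hu) as H.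
    fold L in H. replace ((t - u) ^ 2) with ((u - t) ^ 2) in H by ring. lra.
  - apply sample_set_In; assumption.
  - intros t Ht. apply shrink_bounds; [lra | apply (sample_set_In tau T HT); assumption].
Qed.

Lemma coarse_sample_lower c0 T s d : 0 < c0 -> sample_set tau T ->
  (forall x, sum_ge (sample_index T) (sample_weight x) (c0 * hs_norm x ^ 2)) ->
  0 < d -> chain (fun a b => a + d <= b) T ->
  0 < s <= tau / 2 -> s * tau <= d * (tau - s) ->
  INR (length T) * orbit_lipschitz tau * s ^ 2 <= c0 / 4 ->
  forall x, sum_ge G (fun g => RInt (fun t => Cabs2 (hs_inner x (E t g))) 0 tau)
                   (s * c0 / 8 * hs_norm x ^ 2).
Proof.
  intros Hc0 HT Hlow Hd Hgap Hs Hsd Hsmall x eps Heps.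
  destruct (Hlow x (eps / s)) as [lp [Hn [Hf Hgt]]]; [apply Rdiv_lt_0_compat; lra |].
  set (l := generators lp).
  assert (Hl : Forall G l) by apply (generators_Forall T lp Hf).
  exists l. split; [apply generators_NoDup |]. split; [assumption |].
  rewrite RInt_orbit_sum by assumption.
  pose proof (sample_sum_le_RInt_orbit_sum x l T s d (generators_NoDup lp) Hl HT Hgap Hs Hsd
                ltac:(lra)) as Hint.
  set (L := orbit_lipschitz tau) in *. set (n := INR (length T)) in *.
  set (S := sum_list (orbit_sum x l) T) in *.
  assert (HS : c0 * hs_norm x ^ 2 - eps / s < S)
    by (eapply Rlt_le_trans; [exact Hgt | apply (sample_sum_le_orbit_sums T); assumption]).
  assert (Herr : s * (L * hs_norm x ^ 2) * s ^ 2 * n <= s * hs_norm x ^ 2 * (c0 / 4)).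
  { replace (s * (L * hs_norm x ^ 2) * s ^ 2 * n) with (s * hs_norm x ^ 2 * (n * L * s ^ 2))
      by ring.
    apply Rmult_le_compat_l; [pose proof (pow2_ge_0 (hs_norm x)); nra | assumption]. }
  assert (Hhalf : s / 2 * (c0 * hs_norm x ^ 2) - eps / 2 < s / 2 * S).
  { replace (s / 2 * (c0 * hs_norm x ^ 2) - eps / 2)
      with (s / 2 * (c0 * hs_norm x ^ 2 - eps / s)) by (field; lra).
    apply Rmult_lt_compat_l; lra. }
  assert (0 <= s * c0 * hs_norm x ^ 2) by (apply Rmult_le_pos; [nra | apply pow2_ge_0]).
  lra.
Qed.

Lemma semicont_frame_fine_samples : semicont_frame E G tau ->
  exists delta, delta > 0 /\ forall T, sample_set tau T -> mesh_lt tau delta T -> disc_frame E G T.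
Proof.
  intros [c1 [c2 [Hc1 [Hc2 Hsc]]]].
  destruct (exists_small_pos c1 (4 * orbit_lipschitz tau * tau) 1) as [delta [Hd Hsmall]];
    [lra | pose proof (orbit_lipschitz_ge0 tau); nra | lra |].
  exists delta. split; [lra |]. intros T HT Hm. split.
  - apply sample_frame_bessel, sample_set_In. assumption.
  - exists (c1 / (4 * delta)). split; [apply Rdiv_lt_0_compat; lra |].
    apply (fine_sample_lower c1 delta T); try assumption; try lra.
    intro x. apply (proj1 (Hsc x)).
Qed.

Lemma sample_frame_semicont T : sample_set tau T -> disc_frame E G T -> semicont_frame E G tau.
Proof.
  intros HT [_ [c0 [Hc0 Hlow]]]. destruct (sample_set_gap tau T HT) as [d [Hd Hgap]].
  set (m := Rmin (tau / 2) (d * tau / (tau + d))).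
  assert (Hm : 0 < m) by (apply Rmin_pos; [| apply Rdiv_lt_0_compat]; nra).
  destruct (exists_small_pos (c0 / 4) (INR (length T) * orbit_lipschitz tau) m)
    as [s [[Hs Hsm] Hsmall]];
    [lra | apply Rmult_le_pos; [apply pos_INR | apply orbit_lipschitz_ge0] | assumption |].
  unfold m in Hsm.
  assert (Hs2 : s <= tau / 2) by (pose proof (Rmin_l (tau / 2) (d * tau / (tau + d))); lra).
  assert (Hsd : s * tau <= d * (tau - s)).
  { assert (s * (tau + d) <= d * tau); [| lra].
    apply Rle_trans with (d * tau / (tau + d) * (tau + d)); [| right; field; lra].
    pose proof (Rmin_r (tau / 2) (d * tau / (tau + d))). apply Rmult_le_compat_r; lra. }
  exists (s * c0 / 8), (tau * orbit_bound + 1). pose proof orbit_bound_ge0.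
  split; [apply Rdiv_lt_0_compat; nra |]. split; [nra |]. intro x. split.
  - apply (coarse_sample_lower c0 T s d); try assumption. lra.
  - intros l Hn Hf. eapply Rle_trans; [apply sum_RInt_orbit_le; assumption |].
    pose proof (pow2_ge_0 (hs_norm x)). nra.
Qed.

End SemicontinuousFrames.

Lemma fine_samples_some_sample (X : HilbertSpace) (E : R -> X -> X) (G : X -> Prop) tau : 0 < tau ->
  (exists delta, delta > 0 /\
     forall T, sample_set tau T -> mesh_lt tau delta T -> disc_frame E G T) ->
  exists T, sample_set tau T /\ disc_frame E G T.
Proof.
  intros Htau [delta [Hd H]]. destruct (exists_fine_sample_set tau delta Htau Hd) as [T [Hs Hm]].
  exists T. auto.
Qed.

Lemma is_bounded_op_bound (X : HilbertSpace) (A : X -> X) : is_bounded_op A ->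
  exists M, 0 <= M /\ forall x, hs_norm (A x) <= M * hs_norm x.
Proof.
  intros [_ [_ [M HM]]]. exists (Rmax 0 M). split; [apply Rmax_l |]. intro x.
  eapply Rle_trans; [apply HM |]. apply Rmult_le_compat_r; [apply norm_ge0 | apply Rmax_r].
Qed.

Lemma is_bessel_bound (X : HilbertSpace) (G : X -> Prop) : is_bessel G (fun g => g) ->
  exists Cb, 0 <= Cb /\ forall y l, NoDup l -> Forall G l ->
    sum_list (fun g => Cabs2 (hs_inner y g)) l <= Cb * hs_norm y ^ 2.
Proof.
  intros [Cb HCb]. exists (Rmax 0 Cb). split; [apply Rmax_l |]. intros y l Hn Hf.
  eapply Rle_trans; [apply (HCb y l Hn Hf) |].
  apply Rmult_le_compat_r; [apply pow2_ge_0 | apply Rmax_r].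
Qed.

Theorem theorem3p6 (X : HilbertSpace) (A Astar : X -> X) (E : R -> X -> X)
  (G : X -> Prop) (tau : R) :
  is_bounded_op A -> is_adjoint A Astar -> is_exp Astar E ->
  0 < tau -> countable_set G -> is_bessel G (fun g => g) ->
  (semicont_frame E G tau <->
     (exists delta, delta > 0 /\ forall T : list R,
         sample_set tau T -> mesh_lt tau delta T -> disc_frame E G T)) /\
  ((exists delta, delta > 0 /\ forall T : list R,
         sample_set tau T -> mesh_lt tau delta T -> disc_frame E G T) <->
     (exists T : list R, sample_set tau T /\ disc_frame E G T)).
Proof.
  intros HA Hadj Hexp Htau _ HB.
  destruct (is_bounded_op_bound X A HA) as [M [HM0 HM]].
  destruct (is_bessel_bound X G HB) as [Cb [HCb0 HCb]].
  assert (H12 := semicont_frame_fine_samples X A Astar E M Cb G HM0 HM Hadj Hexp HCb0 HCb tau Htau).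
  assert (H23 := fine_samples_some_sample X E G tau Htau).
  assert (H31 : (exists T, sample_set tau T /\ disc_frame E G T) -> semicont_frame E G tau).
  { intros [T [HT HF]].
    exact (sample_frame_semicont X A Astar E M Cb G HM0 HM Hadj Hexp HCb0 HCb tau Htau T HT HF). }
  tauto.
Qed.
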